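(* Let $R$ be an associative ring with identity and involution $*$, and let $a\in R^{\#}\cap R^{\dagger}$. Then $a\in R^{SEP}$ if and only if $a(a^{\#})^*a^{\dagger}$ and $a^{\dagger}a^2$ are left $a$-equivalent, i.e. $a\cdot a(a^{\#})^*a^{\dagger}=a\cdot a^{\dagger}a^2$.
   Context: An involution on $R$ is a map $x\mapsto x^*$ with $(x^* )^*=x$, $(x+y)^*=x^*+y^*$, $(xy)^*=y^*x^*$. An element $a$ is Moore–Penrose invertible if there is $b$ with $aba=a$, $bab=b$, $(ab)^*=ab$, $(ba)^*=ba$; such $b$ is unique, denoted $a^{\dagger}$, and $R^{\dagger}$ is the set of such $a$. An element $a$ is group invertible if there is $b$ with $aba=a$, $bab=b$, $ab=ba$; such $b$ is unique, denoted $a^{\#}$, and $R^{\#}$ is the set of such $a$. For $a\in R^{\#}\cap R^{\dagger}$, $a$ is SEP if $a^*=a^{\dagger}=a^{\#}$; $R^{SEP}$ denotes the set of SEP elements. For $x,b,c\in R$, $b$ and $c$ are left $x$-equivalent if $xb=xc$. *)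

From mathcomp Require Import all_boot all_algebra.
Set Implicit Arguments. Unset Strict Implicit. Unset Printing Implicit Defensive.
Import GRing.Theory.
Local Open Scope ring_scope.

Definition involution (R : pzRingType) (inv : R -> R) : Prop :=
  (forall x, inv (inv x) = x) /\
  (forall x y, inv (x + y) = inv x + inv y) /\
  (forall x y, inv (x * y) = inv y * inv x).

Definition is_MP (R : pzRingType) (inv : R -> R) (a b : R) : Prop :=
  a * b * a = a /\ b * a * b = b /\ inv (a * b) = a * b /\ inv (b * a) = b * a.

Definition is_group_inv (R : pzRingType) (a b : R) : Prop :=
  a * b * a = a /\ b * a * b = b /\ a * b = b * a.

Definition MP_invertible (R : pzRingType) (inv : R -> R) (a : R) : Prop :=
  exists b, is_MP inv a b.

Definition group_invertible (R : pzRingType) (a : R) : Prop :=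
  exists b, is_group_inv a b.

Definition is_SEP (R : pzRingType) (inv : R -> R) (a : R) : Prop :=
  exists b c, is_MP inv a b /\ is_group_inv a c /\ inv a = b /\ b = c.

Definition left_equiv (R : pzRingType) (x b c : R) : Prop := x * b = x * c.

From mathcomp Require Import all_boot all_algebra.
Set Implicit Arguments. Unset Strict Implicit. Unset Printing Implicit Defensive.
Import GRing.Theory.
Local Open Scope ring_scope.

(* From [a * a * (a^#)^* * a^† = a * a^† * a^2 = a^2] one cancels [a] with
   [a^#] to get [a = a (a^#)^* a^†]; this puts [a] in the left ideal
   [R a^†], forcing [a a^† = a^# a], so [a^† = a^#] and [a] is EP.
   Then [p = a a^#] is a Hermitian idempotent absorbing [(a^#)^*] on both
   sides, and [a (a^#)^* a^# = a] collapses to [(a^#)^* = a]. *)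

Section GroupInverse.

Variables (R : pzRingType) (a c : R).
Hypothesis Hc : is_group_inv a c.

Lemma group_inv_uniq (d : R) : is_group_inv a d -> c = d.
Proof.
case: Hc => [c1 [c2 c3]] [d1 [d2 d3]].
have acad : a * c * (a * d) = a * c by rewrite c3 d3 -mulrA (mulrA a d) d1.
have ac_ad : a * c = a * d by rewrite -acad mulrA c1.
by rewrite -c2 -mulrA ac_ad mulrA -c3 ac_ad d3 d2.
Qed.

Lemma group_inv_mulKsqr (x : R) : c * (a ^+ 2 * x) = a * x.
Proof. by case: Hc => [c1 [_ c3]]; rewrite expr2 !mulrA -c3 c1. Qed.

Lemma group_inv_sqrK_l : c * a ^+ 2 = a.
Proof. by rewrite -[a ^+ 2]mulr1 group_inv_mulKsqr mulr1. Qed.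

Lemma group_inv_sqrK_r : a ^+ 2 * c = a.
Proof. by case: Hc => [c1 [_ c3]]; rewrite expr2 -mulrA c3 mulrA c1. Qed.

Lemma group_inv_sqr_lcancel (x : R) : a ^+ 2 * x = a ^+ 2 -> a * x = a.
Proof. by move=> e; rewrite -group_inv_mulKsqr e group_inv_sqrK_l. Qed.

End GroupInverse.

Section MoorePenrose.

Variables (R : pzRingType) (inv : R -> R).
Hypothesis Hinv : involution inv.

Lemma involutionK : involutive inv. Proof. by case: Hinv. Qed.

Lemma involutionM (x y : R) : inv (x * y) = inv y * inv x.
Proof. by case: Hinv => [_ []]. Qed.

Lemma MP_inv_uniq (a b b' : R) : is_MP inv a b -> is_MP inv a b' -> b = b'.
Proof.
move=> [b1 [b2 [b3 b4]]] [b'1 [b'2 [b'3 b'4]]].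
have ia_r : inv a = inv a * (a * b') by rewrite -{1}b'1 involutionM b'3.
have ia_l : inv a = b * a * inv a by rewrite -{1}b1 -mulrA involutionM b4.
have b_eq : b = b * a * b'.
  rewrite -{1}b2 -mulrA -b3 involutionM ia_r !mulrA -(mulrA b (inv b)).
  by rewrite -involutionM b3 !mulrA b2.
have b'_eq : b' = b * a * b'.
  rewrite -{1}b'2 -b'4 involutionM {1}ia_l -!mulrA (mulrA (inv a)).
  by rewrite -involutionM b'4 b'2 mulrA.
by rewrite b_eq -b'_eq.
Qed.

Lemma MP_sqr_of_range (a b u : R) :
  is_MP inv a b -> a = u * b -> a ^+ 2 * b = a.
Proof.
move=> [_ [b2 _]] e.
have -> : a ^+ 2 * b = u * (b * a * b) by rewrite expr2 {1}e !mulrA.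
by rewrite b2.
Qed.

Lemma group_inv_is_MP (a b c : R) : is_MP inv a b -> is_group_inv a c ->
  a ^+ 2 * b = a -> is_MP inv a c.
Proof.
move=> [_ [_ [b3 _]]] Hc EP.
have ca : c * a = a * b by rewrite -[a in LHS]EP (group_inv_mulKsqr Hc).
by case: Hc => [c1 [c2 c3]]; do ![split => //]; rewrite ?c3 ca.
Qed.

Lemma inv_EP_inverse (a c : R) : is_MP inv a c -> is_group_inv a c ->
  a * inv c * c = a -> inv c = a.
Proof.
move=> [_ [_ [c3 _]]] [c1 [c2 ac]] e.
have pc : a * c * inv c = inv c by rewrite -[a * c]c3 -involutionM mulrA c2.
have cp : inv c * (a * c) = inv c by rewrite -c3 -involutionM ac c2.
have ic_c : inv c * c = a * c.
  by rewrite -[in LHS]pc ac -!mulrA (mulrA a) e.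
by rewrite -cp ac mulrA ic_c c1.
Qed.

End MoorePenrose.

Theorem theorem5p1 (R : pzRingType) (inv : R -> R) (a adag asharp : R) :
  involution inv ->
  is_MP inv a adag ->
  is_group_inv a asharp ->
  (is_SEP inv a <->
   left_equiv a (a * inv asharp * adag) (adag * a ^+ 2)).
Proof.
move=> Hinv Hb Hc; rewrite /left_equiv; split.
  case=> [b [c [Hb' [Hc' [ia bc]]]]].
  have ec := group_inv_uniq Hc Hc'.
  have -> : adag = asharp by rewrite (MP_inv_uniq Hinv Hb Hb') ec bc.
  have -> : inv asharp = a by rewrite ec -bc -ia involutionK.
  by rewrite -expr2 (group_inv_sqrK_r Hc) (group_inv_sqrK_l Hc).
move=> Heq.
have Ha : a * inv asharp * adag = a.
  rewrite -mulrA; apply: (group_inv_sqr_lcancel Hc).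
  have -> : a ^+ 2 * (inv asharp * adag) = a * (a * inv asharp * adag).
    by rewrite expr2 !mulrA.
  by case: Hb => [b1 _]; rewrite Heq expr2 !mulrA b1.
have Hsharp := group_inv_is_MP Hb Hc (MP_sqr_of_range Hb (esym Ha)).
have bc := MP_inv_uniq Hinv Hb Hsharp; rewrite bc in Ha.
have ia : inv a = asharp by rewrite -(inv_EP_inverse Hinv Hsharp Hc Ha) involutionK.
by exists adag, asharp; rewrite bc.
Qed.
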